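(* Let $\alpha,\beta>0$ and $f$ as in the context. Let $(\mathbf{V}^0,\mathbf{P}^0)\in\ell^\infty(\mathbb{Z})\times\ell^\infty(\mathbb{Z})$ be nonnegative and not identically zero, and let $(\mathbf{V},\mathbf{P})$ be the unique global classical solution of $$V_j'(t)=-2\alpha V_j(t)+\beta(P_j(t)+P_{j+1}(t)),\qquad P_j'(t)=f(P_j(t))+\alpha(V_j(t)+V_{j-1}(t))-2\beta P_j(t),\qquad t>0,\ j\in\mathbb{Z},$$ with $(\mathbf{V}(0),\mathbf{P}(0))=(\mathbf{V}^0,\mathbf{P}^0)$. Then $\lim_{t\to+\infty}(V_j(t),P_j(t))=(\beta/\alpha,1)$ locally uniformly in $j\in\mathbb{Z}$.
   Context: $f\in\mathscr{C}^1([0,1])$ satisfies $f(0)=f(1)=0$ and $0<f(u)\le f'(0)u$ for $u\in(0,1)$, extended to a locally Lipschitz function on $\mathbb{R}$ negative on $\mathbb{R}\setminus[0,1]$. Existence and uniqueness of a bounded global classical solution ($V_j,P_j\in\mathscr{C}^1([0,\infty))$) for such data is established in the paper. *)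

From Stdlib Require Import Reals ZArith.
From Coquelicot Require Import Coquelicot.
Open Scope R_scope.

Definition has_deriv_within (g : R -> R) (D : R -> Prop) (x l : R) : Prop :=
  filterlim (fun h => (g (x + h) - g x) / h)
    (within (fun h => h <> 0 /\ D (x + h)) (locally 0)) (locally l).

Definition continuous_within (g : R -> R) (D : R -> Prop) (x : R) : Prop :=
  filterlim g (within D (locally x)) (locally (g x)).

Definition C1_on_with (g : R -> R) (D : R -> Prop) (dg : R -> R) : Prop :=
  (forall x, D x -> has_deriv_within g D x (dg x)) /\
  (forall x, D x -> continuous_within dg D x).

Definition unit_interval (x : R) : Prop := 0 <= x <= 1.
Definition nonneg_half_line (t : R) : Prop := 0 <= t.

Definition locally_lipschitz (g : R -> R) : Prop :=
  forall x, exists delta L, 0 < delta /\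
    forall y z, Rabs (y - x) < delta -> Rabs (z - x) < delta ->
      Rabs (g y - g z) <= L * Rabs (y - z).

(* Standing hypotheses on f; df is its derivative on [0,1], so df 0 = f'(0). *)
Definition admissible_f (f : R -> R) : Prop :=
  (exists df : R -> R,
     C1_on_with f unit_interval df /\
     forall u, 0 < u < 1 -> 0 < f u <= df 0 * u) /\
  f 0 = 0 /\ f 1 = 0 /\
  locally_lipschitz f /\
  (forall u, (u < 0 \/ 1 < u) -> f u < 0).

Definition bounded_seq (a : Z -> R) : Prop := exists M, forall j, Rabs (a j) <= M.

(* Everything is a comparison argument: a difference between the solution and an explicit
   sub- or super-solution is positive at some time, and at a first time where it vanishes its
   derivative is positive, which is impossible.  Each comparison runs on a finite box of sites,
   the comparison function being built so that the inequality is automatic outside the box.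

   - Nonnegativity: compare with -eta e^(Lam t) (1 + |j|) and let eta -> 0.
   - Positivity: an equation whose forcing term is positive has a positive solution, so
     positivity spreads from one component at one site to all sites.
   - Upper bound: (B (K(t) + d|j| + d), K(t) + d|j|), B = beta/alpha, is a super-solution while
     K(t) decreases exponentially to a level slightly above 1, because f < 0 above 1.
   - Lower bound: th(t) (A cos (k (j + 1/2)), cos (k j)) is a sub-solution on a box where the
     cosines are positive, with th increasing to a level slightly below 1, because
     f(p) >= c p below that level; A is close to B and k is small, so this is close to (B, 1). *)

From Stdlib Require Import Reals ZArith Lra Lia Psatz List Classical.
From Coquelicot Require Import Coquelicot.
Open Scope R_scope.

(** * Filters and one-sided continuity *)

Lemma locally_Rabs (x : R) (Q : R -> Prop) :
  locally x Q -> exists d, 0 < d /\ forall y, Rabs (y - x) < d -> Q y.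
Proof. intros [[d Hd] H]. exists d; split; [exact Hd|]. intros y Hy; apply H; exact Hy. Qed.

Lemma continuous_locally_gt (g : R -> R) (x a : R) :
  continuous g x -> a < g x -> locally x (fun y => a < g y).
Proof.
  intros Hc Ha. apply (Hc (fun y => a < y)).
  exact (locally_open _ _ (open_gt a) (fun _ h => h) _ Ha).
Qed.

Lemma continuous_locally_lt (g : R -> R) (x a : R) :
  continuous g x -> g x < a -> locally x (fun y => g y < a).
Proof.
  intros Hc Ha. apply (Hc (fun y => y < a)).
  exact (locally_open _ _ (open_lt a) (fun _ h => h) _ Ha).
Qed.

Lemma continuous_nonneg_of_left (g : R -> R) (x r : R) : continuous g x -> 0 < r ->
  (forall u, x - r < u < x -> 0 < g u) -> 0 <= g x.
Proof.
  intros Hc Hr Hleft. apply Rnot_lt_le. intro Hneg.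
  destruct (locally_Rabs _ _ (continuous_locally_lt _ _ _ Hc Hneg)) as [d [Hd Hball]].
  set (u := x - Rmin (d / 2) (r / 2)).
  assert (0 < Rmin (d / 2) (r / 2)) by (apply Rmin_pos; lra).
  pose proof (Rmin_l (d / 2) (r / 2)). pose proof (Rmin_r (d / 2) (r / 2)).
  assert (g u < 0) by (apply Hball; unfold u; apply Rabs_def1; lra).
  assert (0 < g u) by (apply Hleft; unfold u; lra).
  lra.
Qed.

Lemma filter_forall_In {T A : Type} {F : (T -> Prop) -> Prop} {FF : Filter F}
  (l : list A) (Q : A -> T -> Prop) :
  (forall i, In i l -> F (Q i)) -> F (fun y => forall i, In i l -> Q i y).
Proof.
  induction l as [|a l IH]; intros H.
  - apply filter_forall. intros y i [].
  - apply (filter_imp (fun y => Q a y /\ forall i, In i l -> Q i y)).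
    + intros y [Ha Hl] i [<-|Hi]; auto.
    + apply filter_and; [apply H; left; reflexivity|].
      apply IH. intros i Hi; apply H; right; exact Hi.
Qed.

Lemma at_right_witness (Q : R -> Prop) (t : R) : at_right 0 Q -> 0 < t ->
  exists s, 0 < s <= t /\ Q s.
Proof.
  intros HQ Ht. destruct (locally_Rabs _ _ HQ) as [d [Hd Hball]].
  exists (Rmin (d / 2) t). pose proof (Rmin_l (d / 2) t). pose proof (Rmin_r (d / 2) t).
  assert (0 < Rmin (d / 2) t) by (apply Rmin_pos; lra).
  split; [lra|]. apply Hball; [rewrite Rminus_0_r, Rabs_pos_eq; lra|exact H1].
Qed.

Lemma has_deriv_within_eps (g : R -> R) (D : R -> Prop) (x l : R) :
  has_deriv_within g D x l -> forall e, 0 < e -> exists d, 0 < d /\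
    forall h, h <> 0 -> D (x + h) -> Rabs h < d -> Rabs ((g (x + h) - g x) / h - l) < e.
Proof.
  intros H e He.
  destruct (proj1 (filterlim_locally _ _) H (mkposreal e He)) as [[d Hd] Hball].
  exists d; split; [exact Hd|].
  intros h Hh0 Hh HhD. apply (Hball h); [|split; assumption].
  change (Rabs (h - 0) < d). rewrite Rminus_0_r. exact HhD.
Qed.

Lemma has_deriv_within_right_continuous (g : R -> R) (l : R) :
  has_deriv_within g nonneg_half_line 0 l -> filterlim g (at_right 0) (locally (g 0)).
Proof.
  intros H. apply filterlim_locally. intros eps.
  destruct (has_deriv_within_eps _ _ _ _ H 1 Rlt_0_1) as [d [Hd Hq]].
  assert (Hl : 0 < Rabs l + 1) by (pose proof (Rabs_pos l); lra).
  pose proof (Rmin_l d (eps / (Rabs l + 1))). pose proof (Rmin_r d (eps / (Rabs l + 1))).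
  set (r := Rmin d (eps / (Rabs l + 1))) in *.
  assert (Hr : 0 < r)
    by (apply Rmin_pos; [exact Hd|apply Rdiv_lt_0_compat; [apply cond_pos|exact Hl]]).
  exists (mkposreal r Hr). intros h Hh Hpos.
  change (Rabs (h - 0) < r) in Hh. rewrite Rminus_0_r, Rabs_pos_eq in Hh by lra.
  change (Rabs (g h - g 0) < eps).
  specialize (Hq h ltac:(lra)). rewrite Rplus_0_l in Hq.
  specialize (Hq ltac:(unfold nonneg_half_line; lra) ltac:(rewrite Rabs_pos_eq; lra)).
  set (q := (g h - g 0) / h) in Hq.
  replace (g h - g 0) with (q * h) by (unfold q; field; lra).
  rewrite Rabs_mult, (Rabs_pos_eq h) by lra.
  assert (Rabs q < Rabs l + 1) by (pose proof (Rabs_triang_inv q l); lra).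
  assert (Rabs q * h <= (Rabs l + 1) * h) by (apply Rmult_le_compat_r; lra).
  assert ((Rabs l + 1) * h < (Rabs l + 1) * (eps / (Rabs l + 1))) by (apply Rmult_lt_compat_l; lra).
  replace ((Rabs l + 1) * (eps / (Rabs l + 1))) with (pos eps) in * by (field; lra).
  lra.
Qed.


(** * Differential inequalities *)

Lemma is_derive_pos_left (g : R -> R) (x l r : R) :
  is_derive g x l -> 0 < l -> 0 < r -> exists t, x - r < t < x /\ g t < g x.
Proof.
  intros Hd Hl Hr. apply is_derive_Reals in Hd.
  destruct (Hd l Hl) as [[d Hd0] Hq].
  assert (Hm : 0 < Rmin (d / 2) (r / 2)) by (apply Rmin_pos; lra).
  pose proof (Rmin_l (d / 2) (r / 2)). pose proof (Rmin_r (d / 2) (r / 2)).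
  set (h := - Rmin (d / 2) (r / 2)) in *.
  assert (Hh : Rabs h < d) by (unfold h; rewrite Rabs_Ropp, Rabs_pos_eq; simpl; lra).
  specialize (Hq h ltac:(unfold h; lra) Hh). apply Rabs_def2 in Hq.
  exists (x + h). split; [unfold h; lra|].
  assert (Hq' : 0 < (g (x + h) - g x) / h) by lra.
  replace (g (x + h)) with (g x + (g (x + h) - g x) / h * h) by (field; unfold h; lra).
  assert (h < 0) by (unfold h; lra). nra.
Qed.

Lemma is_derive_mult_const_r (g : R -> R) (a u dg : R) :
  is_derive g u dg -> is_derive (fun u => g u * a) u (dg * a).
Proof.
  intros H. apply (is_derive_ext (fun u => a * g u)); [intros; apply Rmult_comm|].
  rewrite Rmult_comm. apply is_derive_scal, H.
Qed.

Lemma is_derive_exp_weighted (x : R -> R) (c t d : R) : is_derive x t d ->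
  is_derive (fun s => exp (c * s) * x s) t (exp (c * t) * (d + c * x t)).
Proof.
  intros H.
  replace (exp (c * t) * (d + c * x t)) with (c * exp (c * t) * x t + exp (c * t) * d) by ring.
  apply (Derive.is_derive_mult (fun s => exp (c * s)) x); [|exact H].
  auto_derive; [exact I|ring].
Qed.

Lemma exp_weighted_mvt (x dx : R -> R) (c a b : R) : a < b ->
  (forall s, a <= s <= b -> is_derive x s (dx s)) ->
  exists xi, a <= xi <= b /\
    exp (c * b) * x b - exp (c * a) * x a = exp (c * xi) * (dx xi + c * x xi) * (b - a).
Proof.
  intros Hab Hd.
  destruct (MVT_gen (fun s => exp (c * s) * x s) a b (fun s => exp (c * s) * (dx s + c * x s)))
    as [xi [Hxi Heq]]; rewrite ?Rmin_left, ?Rmax_right in * by lra.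
  - intros s Hs. apply is_derive_exp_weighted, Hd. lra.
  - intros s Hs. apply continuity_pt_filterlim.
    apply (@ex_derive_continuous R_AbsRing R_NormedModule (fun s => exp (c * s) * x s)).
    eexists. apply is_derive_exp_weighted, Hd, Hs.
  - exists xi. auto.
Qed.

Lemma positive_persists (x dx : R -> R) (c s : R) :
  (forall t, s <= t -> is_derive x t (dx t)) ->
  (forall t, s <= t -> - c * x t <= dx t) -> 0 < x s ->
  forall t, s <= t -> 0 < x t.
Proof.
  intros Hd Hineq Hs t [Ht|<-]; [|exact Hs].
  destruct (exp_weighted_mvt x dx c s t Ht) as [xi [Hxi Heq]].
  { intros u Hu. apply Hd. lra. }
  assert (0 <= exp (c * xi) * (dx xi + c * x xi) * (t - s)).
  { specialize (Hineq xi).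
    apply Rmult_le_pos; [apply Rmult_le_pos|]; [left; apply exp_pos| |]; lra. }
  pose proof (exp_pos (c * s)). pose proof (exp_pos (c * t)).
  assert (0 < exp (c * t) * x t) by nra.
  nra.
Qed.

Lemma positive_of_forcing (x dx g : R -> R) (c a : R) :
  (forall t, a < t -> is_derive x t (dx t)) ->
  (forall t, a < t -> - c * x t + g t <= dx t) ->
  (forall t, a < t -> 0 <= x t) -> (forall t, a < t -> 0 < g t) ->
  forall t, a < t -> 0 < x t.
Proof.
  intros Hd Hineq Hnn Hg t Ht.
  set (a' := (a + t) / 2).
  destruct (exp_weighted_mvt x dx c a' t) as [xi [Hxi Heq]]; [unfold a'; lra| |].
  { intros u Hu. apply Hd. unfold a' in Hu; lra. }
  assert (0 < exp (c * xi) * (dx xi + c * x xi) * (t - a')).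
  { specialize (Hineq xi); specialize (Hg xi).
    apply Rmult_lt_0_compat; [apply Rmult_lt_0_compat|]; [apply exp_pos| |]; unfold a' in *; lra. }
  assert (0 <= x a') by (apply Hnn; unfold a'; lra).
  pose proof (exp_pos (c * a')). pose proof (exp_pos (c * t)).
  assert (0 < exp (c * t) * x t) by nra.
  nra.
Qed.

Lemma exp_le_mono (x y : R) : x <= y -> exp x <= exp y.
Proof. intros [H|H]; [left; apply exp_increasing, H|right; rewrite H; reflexivity]. Qed.

Definition relax (a b r t0 u : R) : R := b + (a - b) * exp (- r * (u - t0)).

Lemma relax_start a b r t0 : relax a b r t0 t0 = a.
Proof. unfold relax. rewrite Rminus_diag, Rmult_0_r, exp_0. ring. Qed.

Lemma is_derive_relax a b r t0 u :
  is_derive (relax a b r t0) u (r * (b - relax a b r t0 u)).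
Proof. unfold relax. auto_derive; [exact I|]. unfold Rminus. ring. Qed.

Lemma relax_between a b r t0 u : 0 <= r -> t0 <= u ->
  Rmin a b <= relax a b r t0 u <= Rmax a b.
Proof.
  intros Hr Hu. unfold relax.
  assert (He : 0 < exp (- r * (u - t0)) <= 1).
  { split; [apply exp_pos|]. rewrite <- exp_0. apply exp_le_mono. nra. }
  destruct (Rle_dec a b).
  - rewrite Rmin_left, Rmax_right by lra. nra.
  - rewrite Rmin_right, Rmax_left by lra. nra.
Qed.

Lemma relax_profile (a b r lam t0 u : R) : 0 < a <= b -> 0 <= r -> r * b <= lam * a -> t0 <= u ->
  a <= relax a b r t0 u <= b /\ r * (b - relax a b r t0 u) <= lam * relax a b r t0 u.
Proof.
  intros Hab Hr Hrl Hu. pose proof (relax_between a b r t0 u Hr Hu) as Hb.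
  rewrite Rmin_left, Rmax_right in Hb by lra.
  assert (0 <= lam) by nra.
  split; [exact Hb|nra].
Qed.

Lemma relax_eventually_near a b r t0 eps : 0 < r -> 0 < eps ->
  exists T, t0 <= T /\ forall u, T <= u -> Rabs (relax a b r t0 u - b) <= eps.
Proof.
  intros Hr Heps.
  set (C := Rabs (a - b) + 1).
  assert (HC : 0 < C) by (unfold C; pose proof (Rabs_pos (a - b)); lra).
  exists (t0 + Rabs (ln (eps / C)) / r). split.
  { pose proof (Rabs_pos (ln (eps / C))). assert (0 <= Rabs (ln (eps / C)) / r) by
      (apply Rdiv_le_0_compat; lra). lra. }
  intros u Hu.
  assert (Hexp : exp (- r * (u - t0)) <= eps / C).
  { rewrite <- (exp_ln (eps / C)) by (apply Rdiv_lt_0_compat; lra).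
    apply exp_le_mono.
    assert (Rabs (ln (eps / C)) <= r * (u - t0)).
    { apply (Rmult_le_compat_l r) in Hu; [|lra].
      replace (r * (t0 + Rabs (ln (eps / C)) / r)) with (r * t0 + Rabs (ln (eps / C))) in Hu
        by (field; lra). lra. }
    pose proof (Rle_abs (- ln (eps / C))). rewrite Rabs_Ropp in *. lra. }
  unfold relax.
  replace (b + (a - b) * exp (- r * (u - t0)) - b) with ((a - b) * exp (- r * (u - t0))) by ring.
  rewrite Rabs_mult, (Rabs_pos_eq (exp _)) by (left; apply exp_pos).
  apply Rle_trans with (C * (eps / C)); [|right; field; lra].
  apply Rmult_le_compat; [apply Rabs_pos|left; apply exp_pos|unfold C; lra|exact Hexp].
Qed.

Lemma Rabs_IZR_neighbour (k k' : Z) : (Z.abs (k' - k) <= 1)%Z -> Rabs (IZR k') <= Rabs (IZR k) + 1.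
Proof.
  intros Hk. replace (IZR k') with (IZR k + IZR (k' - k)) by (rewrite minus_IZR; ring).
  eapply Rle_trans; [apply Rabs_triang|]. rewrite <- (abs_IZR (k' - k)).
  apply Rplus_le_compat_l, (IZR_le _ 1), Hk.
Qed.

Definition growth_weight (Lam : R) (k : Z) (u : R) : R := exp (Lam * u) * (1 + Rabs (IZR k)).

Lemma is_derive_growth_weight Lam k u :
  is_derive (growth_weight Lam k) u (Lam * growth_weight Lam k u).
Proof. unfold growth_weight. auto_derive; [exact I|]. ring. Qed.

Lemma growth_weight_ge Lam k u : 0 <= Lam -> 0 <= u ->
  1 + Rabs (IZR k) <= growth_weight Lam k u /\ exp (Lam * u) <= growth_weight Lam k u.
Proof.
  intros HL Hu. unfold growth_weight. pose proof (Rabs_pos (IZR k)).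
  assert (1 <= exp (Lam * u)) by (pose proof (exp_ineq1_le (Lam * u)); nra).
  split; nra.
Qed.

Lemma growth_weight_neighbour Lam k k' u : (Z.abs (k' - k) <= 1)%Z ->
  growth_weight Lam k' u <= growth_weight Lam k u + exp (Lam * u).
Proof.
  intros Hk. unfold growth_weight.
  pose proof (Rabs_IZR_neighbour k k' Hk). pose proof (exp_pos (Lam * u)). nra.
Qed.


(** * Comparison on finite boxes of the lattice *)

Section FirstTouch.
Variables (A : Type) (l : list A) (z dz : A -> R -> R) (t0 : R).
Hypothesis z_derive : forall i t, In i l -> t0 <= t -> is_derive (z i) t (dz i t).
Hypothesis z_init : forall i, In i l -> 0 < z i t0.
Hypothesis z_touch : forall i t, In i l -> t0 < t ->
  (forall k, In k l -> 0 <= z k t) -> z i t = 0 -> 0 < dz i t.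

Let z_continuous i t : In i l -> t0 <= t -> continuous (z i) t.
Proof.
  intros Hi Ht. apply (@ex_derive_continuous R_AbsRing R_NormedModule).
  eexists. apply z_derive; eauto.
Qed.

Let positive_upto s := t0 <= s /\ forall u k, t0 <= u <= s -> In k l -> 0 < z k u.

Let positive_upto_extend s : t0 <= s -> (forall u k, t0 <= u < s -> In k l -> 0 < z k u) ->
  (forall k, In k l -> 0 < z k s) -> exists s', s < s' /\ positive_upto s'.
Proof.
  intros Hs Hbefore Hat.
  assert (Hloc : locally s (fun y => forall k, In k l -> 0 < z k y)).
  { apply filter_forall_In. intros k Hk.
    apply continuous_locally_gt; [apply z_continuous|apply Hat]; auto. }
  destruct (locally_Rabs _ _ Hloc) as [d [Hd Hball]].
  exists (s + d / 2). split; [lra|]. split; [lra|].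
  intros u k Hu Hk. destruct (Rlt_or_le u s); [apply Hbefore; auto; lra|].
  apply Hball; [apply Rabs_def1; lra|exact Hk].
Qed.

Lemma first_touch i t : In i l -> t0 <= t -> 0 < z i t.
Proof.
  intros Hi Ht. apply Rnot_le_lt. intro Hbad.
  destruct (positive_upto_extend t0 (Rle_refl _) ltac:(intros; lra) z_init) as [s0 [Hs0 Es0]].
  (* tau is the first time at which some z k stops being positive *)
  destruct (completeness positive_upto) as [tau [Hub Hlub]].
  { exists t. intros s [_ Hpos]. apply Rnot_lt_le. intro.
    specialize (Hpos t i ltac:(lra) Hi). lra. }
  { exists s0. exact Es0. }
  assert (Htau0 : t0 < tau) by (specialize (Hub s0 Es0); lra).
  assert (Hbefore : forall u k, t0 <= u < tau -> In k l -> 0 < z k u).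
  { intros u k Hu Hk. apply NNPP. intro Hn.
    assert (Hu' : is_upper_bound positive_upto u).
    { intros s [Hs Hpos]. apply Rnot_lt_le. intro. apply Hn, Hpos; auto; lra. }
    specialize (Hlub u Hu'). lra. }
  assert (Hnonneg : forall k, In k l -> 0 <= z k tau).
  { intros k Hk.
    apply (continuous_nonneg_of_left _ tau (tau - t0)); [apply z_continuous; auto; lra|lra|].
    intros u Hu. apply Hbefore; auto; lra. }
  assert (Hzero : exists j, In j l /\ z j tau = 0).
  { apply NNPP. intro Hn.
    assert (Hat : forall k, In k l -> 0 < z k tau).
    { intros k Hk. destruct (Hnonneg k Hk) as [|Heq]; auto. exfalso; apply Hn; eauto. }
    destruct (positive_upto_extend tau (Rlt_le _ _ Htau0) Hbefore Hat) as [s [Hs Es]].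
    specialize (Hub s Es). lra. }
  destruct Hzero as [j [Hj Hzj]].
  destruct (is_derive_pos_left (z j) tau (dz j tau) (tau - t0)) as [u [Hu Hlt]].
  - apply z_derive; auto; lra.
  - apply z_touch; auto.
  - lra.
  - assert (0 < z j u) by (apply Hbefore; auto; lra). lra.
Qed.

End FirstTouch.

Definition zrange (a b : Z) : list Z :=
  map (fun n => (a + Z.of_nat n)%Z) (seq 0 (Z.to_nat (b - a + 1))).

Lemma in_zrange a b j : In j (zrange a b) <-> (a <= j <= b)%Z.
Proof.
  unfold zrange. rewrite in_map_iff. split.
  - intros [n [<- Hn]]. apply in_seq in Hn. lia.
  - intros H. exists (Z.to_nat (j - a)). split; [lia|]. apply in_seq. lia.
Qed.

Lemma list_min_pos (F : Z -> R) (l : list Z) :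
  (forall j, In j l -> 0 < F j) -> exists m, 0 < m /\ forall j, In j l -> m <= F j.
Proof.
  induction l as [|a l IH]; intros H.
  - exists 1. split; [lra|]. intros j [].
  - destruct IH as [m [Hm Hle]]; [intros j Hj; apply H; right; exact Hj|].
    exists (Rmin m (F a)). split; [apply Rmin_pos; [exact Hm|apply H; left; reflexivity]|].
    intros j [<-|Hj]; [apply Rmin_r|eapply Rle_trans; [apply Rmin_l|apply Hle, Hj]].
Qed.

Section BoxPositivity.
Variables (zV zP dzV dzP : Z -> R -> R) (aV bV aP bP : Z) (t0 : R).
Hypothesis zV_derive : forall k u, (aV <= k <= bV)%Z -> t0 <= u -> is_derive (zV k) u (dzV k u).
Hypothesis zP_derive : forall k u, (aP <= k <= bP)%Z -> t0 <= u -> is_derive (zP k) u (dzP k u).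
Hypothesis zV_init : forall k, (aV <= k <= bV)%Z -> 0 < zV k t0.
Hypothesis zP_init : forall k, (aP <= k <= bP)%Z -> 0 < zP k t0.
Hypothesis zV_touch : forall k u, (aV <= k <= bV)%Z -> t0 < u ->
  (forall i, (aV <= i <= bV)%Z -> 0 <= zV i u) -> (forall i, (aP <= i <= bP)%Z -> 0 <= zP i u) ->
  zV k u = 0 -> 0 < dzV k u.
Hypothesis zP_touch : forall k u, (aP <= k <= bP)%Z -> t0 < u ->
  (forall i, (aV <= i <= bV)%Z -> 0 <= zV i u) -> (forall i, (aP <= i <= bP)%Z -> 0 <= zP i u) ->
  zP k u = 0 -> 0 < dzP k u.

Lemma box_positivity u : t0 <= u ->
  (forall k, (aV <= k <= bV)%Z -> 0 < zV k u) /\ (forall k, (aP <= k <= bP)%Z -> 0 < zP k u).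
Proof.
  set (l := map inl (zrange aV bV) ++ map inr (zrange aP bP)).
  set (z := fun (i : Z + Z) => match i with inl k => zV k | inr k => zP k end).
  set (dz := fun (i : Z + Z) => match i with inl k => dzV k | inr k => dzP k end).
  assert (HinV : forall k, In (inl k) l <-> (aV <= k <= bV)%Z).
  { intros k. unfold l. rewrite in_app_iff, !in_map_iff, <- in_zrange. split.
    - intros [[k' [[= ->] Hk]]|[k' [Hk _]]]; [exact Hk|discriminate].
    - intros Hk. left. exists k. auto. }
  assert (HinP : forall k, In (inr k) l <-> (aP <= k <= bP)%Z).
  { intros k. unfold l. rewrite in_app_iff, !in_map_iff, <- in_zrange. split.
    - intros [[k' [Hk _]]|[k' [[= ->] Hk]]]; [discriminate|exact Hk].
    - intros Hk. right. exists k. auto. }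
  assert (Hall : forall i t, In i l -> t0 <= t -> 0 < z i t).
  { apply (first_touch _ l z dz t0).
    - intros [k|k] t Hi Ht; [apply zV_derive; [apply HinV, Hi|exact Ht]
                            |apply zP_derive; [apply HinP, Hi|exact Ht]].
    - intros [k|k] Hi; [apply zV_init, HinV, Hi|apply zP_init, HinP, Hi].
    - intros i t Hi Ht Hnn.
      assert (HnnV : forall j, (aV <= j <= bV)%Z -> 0 <= zV j t)
        by (intros j Hj; apply (Hnn (inl j)), HinV, Hj).
      assert (HnnP : forall j, (aP <= j <= bP)%Z -> 0 <= zP j t)
        by (intros j Hj; apply (Hnn (inr j)), HinP, Hj).
      destruct i as [k|k];
        [apply zV_touch; auto; apply HinV, Hi|apply zP_touch; auto; apply HinP, Hi]. }
  intros Hu. split; intros k Hk.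
  - apply (Hall (inl k)); [apply HinV, Hk|exact Hu].
  - apply (Hall (inr k)); [apply HinP, Hk|exact Hu].
Qed.

End BoxPositivity.


(** * Cosine profiles *)

Lemma cos_add_sub (a h : R) : cos (a - h) + cos (a + h) = 2 * cos h * cos a.
Proof.
  rewrite form1. replace ((a - h - (a + h)) / 2) with (- h) by field.
  replace ((a - h + (a + h)) / 2) with a by field. rewrite cos_neg. ring.
Qed.

Lemma cos_ge_1_sub_sqr_half (x : R) : Rabs x <= PI / 2 -> 1 - x² / 2 <= cos x.
Proof.
  intros Hx. apply Rabs_le_between in Hx.
  destruct (cos_bound x 0 ltac:(lra) ltac:(lra)) as [H _].
  eapply Rle_trans; [|exact H].
  unfold cos_approx, cos_term. simpl. unfold Rsqr. right. field.
Qed.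

Lemma cos_parameters (n delta : R) (N : Z) : 0 <= n -> 0 < delta <= 1 ->
  exists (L : Z) (k : R), (N <= L)%Z /\ 0 < k /\ k * (IZR L + 1) = PI / 2 /\
    forall x, Rabs x <= n + 1 -> 1 - delta <= cos (k * x).
Proof.
  intros Hn Hd.
  set (L := Z.max (Z.max N 0) (up (2 * (n + 1) / delta))).
  assert (HL : 2 * (n + 1) / delta < IZR L + 1).
  { destruct (archimed (2 * (n + 1) / delta)) as [Hup _].
    assert (IZR (up (2 * (n + 1) / delta)) <= IZR L) by (apply IZR_le; unfold L; lia). lra. }
  assert (HL0 : 0 <= IZR L) by (apply IZR_le; unfold L; lia).
  pose proof PI_RGT_0. pose proof PI_4. pose proof PI2_1.
  set (k := PI / (2 * (IZR L + 1))).
  assert (Hk : 0 < k) by (apply Rdiv_lt_0_compat; lra).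
  assert (Hkn : k * (n + 1) <= delta).
  { apply (Rmult_lt_compat_r delta) in HL; [|lra].
    replace (2 * (n + 1) / delta * delta) with (2 * (n + 1)) in HL by (field; lra).
    unfold k. apply (Rmult_le_reg_r (2 * (IZR L + 1))); [lra|].
    replace (PI / (2 * (IZR L + 1)) * (n + 1) * (2 * (IZR L + 1))) with (PI * (n + 1))
      by (field; lra).
    nra. }
  exists L, k. split; [unfold L; lia|]. split; [exact Hk|].
  split; [unfold k; field; lra|].
  intros x Hx.
  assert (Hkx : Rabs (k * x) <= delta).
  { rewrite Rabs_mult, Rabs_pos_eq by lra. eapply Rle_trans; [|exact Hkn].
    apply Rmult_le_compat_l; lra. }
  eapply Rle_trans; [|apply cos_ge_1_sub_sqr_half; lra].
  assert ((k * x)² <= delta * delta).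
  { rewrite Rsqr_abs. unfold Rsqr. pose proof (Rabs_pos (k * x)). nra. }
  nra.
Qed.

Lemma sub_coefficients (alpha beta c gam delta : R) :
  0 < alpha -> 0 < beta -> 0 < c -> 0 < delta <= 1 / 2 -> 8 * beta * delta <= c ->
  1 - delta <= gam <= 1 ->
  exists A lam, 0 < A /\ 0 < lam /\ A * (2 * alpha + lam) < 2 * beta * gam /\
    2 * beta + lam < c + 2 * alpha * A * gam /\ beta / alpha * ((1 - delta) * (1 - delta)) <= A.
Proof.
  intros Ha Hb Hc Hd Hdc Hg.
  set (lam := Rmin (c / 8) (alpha * delta)).
  assert (Hlam : 0 < lam) by (apply Rmin_pos; nra).
  assert (Hlam1 : lam <= c / 8) by apply Rmin_l.
  assert (Hlam2 : lam <= alpha * delta) by apply Rmin_r.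
  set (A := beta * gam / (alpha + lam)).
  assert (HA : A * (alpha + lam) = beta * gam) by (unfold A; field; lra).
  assert (HA0 : 0 < A) by (unfold A; apply Rdiv_lt_0_compat; nra).
  assert (HaA : beta * ((1 - delta) * (1 - delta)) <= alpha * A).
  { apply (Rmult_le_reg_r (alpha + lam)); [lra|].
    replace (alpha * A * (alpha + lam)) with (alpha * (beta * gam)) by (rewrite <- HA; ring).
    assert ((alpha + lam) * (1 - delta) <= alpha) by nra.
    assert (beta * (1 - delta) * ((alpha + lam) * (1 - delta)) <= beta * (1 - delta) * alpha)
      by (apply Rmult_le_compat_l; nra).
    assert (alpha * (beta * (1 - delta)) <= alpha * (beta * gam))
      by (apply Rmult_le_compat_l; [lra|]; apply Rmult_le_compat_l; lra).
    lra. }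
  exists A, lam. split; [exact HA0|]. split; [exact Hlam|]. split; [nra|]. split.
  - assert (beta * ((1 - delta) * (1 - delta)) * (1 - delta) <= alpha * A * gam)
      by (apply Rmult_le_compat; nra).
    assert (beta * (1 - 3 * delta) <= beta * ((1 - delta) * (1 - delta)) * (1 - delta))
      by (rewrite Rmult_assoc; apply Rmult_le_compat_l; nra).
    lra.
  - apply (Rmult_le_reg_l alpha); [exact Ha|].
    replace (alpha * (beta / alpha * ((1 - delta) * (1 - delta))))
      with (beta * ((1 - delta) * (1 - delta))) by (field; lra).
    exact HaA.
Qed.


(** * The nonlinearity *)

Section AdmissibleNonlinearity.
Variable f : R -> R.
Hypothesis Hf : admissible_f f.

Lemma admissible_f_continuous x : continuity_pt f x.
Proof.
  destruct Hf as [_ [_ [_ [Hlip _]]]].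
  destruct (Hlip x) as [d [L [Hd HL]]].
  apply continuity_pt_locally. intros eps.
  assert (HL1 : 0 < Rabs L + 1) by (pose proof (Rabs_pos L); lra).
  exists (mkposreal _
    (Rmin_pos d (eps / (Rabs L + 1)) Hd (Rdiv_lt_0_compat _ _ (cond_pos eps) HL1))).
  intros y Hy. change (Rabs (y - x) < Rmin d (eps / (Rabs L + 1))) in Hy.
  pose proof (Rmin_l d (eps / (Rabs L + 1))). pose proof (Rmin_r d (eps / (Rabs L + 1))).
  assert (Hxx : Rabs (x - x) < d) by (rewrite Rminus_diag, Rabs_R0; exact Hd).
  specialize (HL y x ltac:(lra) Hxx).
  pose proof (Rabs_pos L). pose proof (Rabs_pos (y - x)). pose proof (cond_pos eps).
  assert (L * Rabs (y - x) <= Rabs L * Rabs (y - x))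
    by (apply Rmult_le_compat_r; [lra|apply RRle_abs]).
  assert (Rabs L * Rabs (y - x) <= Rabs L * (eps / (Rabs L + 1))) by (apply Rmult_le_compat_l; lra).
  assert (Rabs L * (eps / (Rabs L + 1)) < eps)
    by (apply Rmult_lt_reg_r with (Rabs L + 1); [lra|field_simplify; lra]).
  lra.
Qed.

Lemma admissible_f_ge_neg_linear M : 0 < M ->
  exists L, 0 < L /\ forall x, Rabs x <= M -> - L * Rabs x <= f x.
Proof.
  intros HM. destruct Hf as [_ [Hf0 [_ [Hlip _]]]].
  destruct (Hlip 0) as [d [L0 [Hd HL]]].
  destruct (continuity_ab_min f (- M) M ltac:(lra) (fun c _ => admissible_f_continuous c))
    as [xmin Hmin].
  assert (Hq : 0 <= Rabs (f xmin) / d) by (apply Rdiv_le_0_compat; [apply Rabs_pos|lra]).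
  exists (Rabs L0 + Rabs (f xmin) / d + 1). split; [pose proof (Rabs_pos L0); lra|].
  intros x Hx. pose proof (Rabs_pos x). pose proof (Rabs_pos L0).
  destruct (Rlt_or_le (Rabs x) d) as [Hs|Hs].
  (* near 0 the Lipschitz bound at 0 applies, away from 0 the minimum of f on [-M, M] *)
  - assert (H00 : Rabs (0 - 0) < d) by (rewrite Rminus_diag, Rabs_R0; exact Hd).
    specialize (HL x 0 ltac:(rewrite Rminus_0_r; exact Hs) H00).
    rewrite Hf0, !Rminus_0_r in HL.
    pose proof (Rle_abs (- f x)). rewrite Rabs_Ropp in *.
    assert (L0 * Rabs x <= Rabs L0 * Rabs x) by (apply Rmult_le_compat_r; [lra|apply RRle_abs]).
    nra.
  - assert (f xmin <= f x) by (apply Hmin, Rabs_le_between, Hx).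
    assert (Rabs (f xmin) / d * d <= Rabs (f xmin) / d * Rabs x) by (apply Rmult_le_compat_l; lra).
    replace (Rabs (f xmin) / d * d) with (Rabs (f xmin)) in * by (field; lra).
    pose proof (Rle_abs (- f xmin)). rewrite Rabs_Ropp in *. nra.
Qed.

Lemma admissible_f_neg_uniform a b : 1 < a -> a <= b ->
  exists m, 0 < m /\ forall x, a <= x <= b -> f x <= - m.
Proof.
  intros Ha Hab. destruct Hf as [_ [_ [_ [_ Hneg]]]].
  destruct (continuity_ab_maj f a b Hab (fun c _ => admissible_f_continuous c)) as [xmax [Hmax Hx]].
  exists (- f xmax). split; [assert (f xmax < 0) by (apply Hneg; right; lra); lra|].
  intros x Hxab. specialize (Hmax x Hxab). lra.
Qed.

Lemma admissible_f_ge_linear th : 0 < th < 1 ->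
  exists c, 0 < c /\ forall p, 0 <= p <= th -> c * p <= f p.
Proof.
  intros Hth. destruct Hf as [[df [[Hder _] Hkpp]] [Hf0 _]].
  assert (Hdf : 0 < df 0) by (destruct (Hkpp (1 / 2) ltac:(lra)); nra).
  assert (U0 : unit_interval 0) by (unfold unit_interval; lra).
  destruct (has_deriv_within_eps f unit_interval 0 (df 0) (Hder 0 U0) (df 0 / 2)) as [d [Hd Hq]];
    [lra|].
  pose proof (Rmin_l (d / 2) th). pose proof (Rmin_r (d / 2) th).
  set (h := Rmin (d / 2) th) in *.
  assert (Hh : 0 < h) by (apply Rmin_pos; lra).
  destruct (continuity_ab_min f h th ltac:(lra) (fun c _ => admissible_f_continuous c))
    as [xmin [Hmin Hxmin]].
  assert (Hfmin : 0 < f xmin) by (apply Hkpp; lra).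
  exists (Rmin (df 0 / 2) (f xmin / th)).
  split; [apply Rmin_pos; [lra|apply Rdiv_lt_0_compat; lra]|].
  intros p Hp.
  pose proof (Rmin_l (df 0 / 2) (f xmin / th)). pose proof (Rmin_r (df 0 / 2) (f xmin / th)).
  (* for small p use f'(0) > 0, for larger p the positive minimum of f on [h, th] *)
  destruct (Rlt_or_le p h) as [Hp1|Hp1].
  - destruct (Req_dec p 0) as [->|Hp0]; [rewrite Hf0; lra|].
    specialize (Hq p Hp0). rewrite Rplus_0_l, Hf0, Rminus_0_r in Hq.
    specialize (Hq ltac:(unfold unit_interval; lra) ltac:(rewrite Rabs_pos_eq; lra)).
    apply Rabs_def2 in Hq.
    assert (f p / p * p = f p) by (field; lra).
    assert (df 0 / 2 * p < f p / p * p) by (apply Rmult_lt_compat_r; lra).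
    nra.
  - assert (f xmin <= f p) by (apply Hmin; lra).
    assert (f xmin / th * p <= f xmin / th * th)
      by (apply Rmult_le_compat_l; [left; apply Rdiv_lt_0_compat|]; lra).
    replace (f xmin / th * th) with (f xmin) in * by (field; lra).
    assert (Rmin (df 0 / 2) (f xmin / th) * p <= f xmin / th * p) by (apply Rmult_le_compat_r; lra).
    lra.
Qed.

End AdmissibleNonlinearity.


(** * Long-time behaviour of the lattice system *)

Definition V_rhs (alpha beta : R) (V P : Z -> R -> R) (j : Z) (t : R) : R :=
  - 2 * alpha * V j t + beta * (P j t + P (j + 1)%Z t).

Definition P_rhs (alpha beta : R) (f : R -> R) (V P : Z -> R -> R) (j : Z) (t : R) : R :=
  f (P j t) + alpha * (V j t + V (j - 1)%Z t) - 2 * beta * P j t.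

Section Solution.
Variables (alpha beta M : R) (f : R -> R) (V P : Z -> R -> R).
Hypothesis alpha_pos : 0 < alpha.
Hypothesis beta_pos : 0 < beta.
Hypothesis f_admissible : admissible_f f.
Hypothesis M_pos : 0 < M.
Hypothesis VP_bounded : forall j t, 0 <= t -> Rabs (V j t) <= M /\ Rabs (P j t) <= M.
Hypothesis V_derive : forall j t, 0 < t -> is_derive (V j) t (V_rhs alpha beta V P j t).
Hypothesis P_derive : forall j t, 0 < t -> is_derive (P j) t (P_rhs alpha beta f V P j t).

Lemma V_bounds j t : 0 <= t -> - M <= V j t <= M.
Proof. intros Ht. apply Rabs_le_between, VP_bounded, Ht. Qed.

Lemma P_bounds j t : 0 <= t -> - M <= P j t <= M.
Proof. intros Ht. apply Rabs_le_between, VP_bounded, Ht. Qed.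

Section SuperSolution.
Variables (d K0 K1 rho m : R) (K : Z).
Hypothesis d_pos : 0 < d.
Hypothesis K1_gt_1 : 1 < K1.
Hypothesis K1_lt_K0 : K1 < K0.
Hypothesis K0_large : M < K0 /\ M < beta / alpha * K0.
Hypothesis rho_pos : 0 < rho.
Hypothesis rho_small : rho * (K0 - K1) <= alpha * d / 2 /\ rho * (K0 - K1) <= m / 4.
Hypothesis f_le : forall x, K1 <= x <= K1 + M -> f x <= - m.
Hypothesis m_large : 6 * beta * d <= m.
Hypothesis K_large : M < d * IZR K /\ M < beta / alpha * (d * IZR K).

Let B := beta / alpha.
Let Kt := relax K0 K1 rho 1.

Let B_pos : 0 < B.
Proof. apply Rdiv_lt_0_compat; assumption. Qed.

Let alpha_B : alpha * B = beta.
Proof. unfold B. field. apply Rgt_not_eq, alpha_pos. Qed.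

Lemma Kt_bounds u : 1 <= u -> K1 <= Kt u <= K0 /\ - rho * (K0 - K1) <= rho * (K1 - Kt u).
Proof.
  intros Hu. assert (Hb := relax_between K0 K1 rho 1 u (Rlt_le _ _ rho_pos) Hu).
  rewrite Rmin_right, Rmax_left in Hb by lra. fold Kt in Hb. split; [exact Hb|nra].
Qed.

Lemma super_bound_outside k u : 1 <= u -> (K < Z.abs k)%Z ->
  V k u < B * (Kt u + d * Rabs (IZR k) + d) /\ P k u < Kt u + d * Rabs (IZR k).
Proof.
  intros Hu Hk. destruct (Kt_bounds u Hu) as [[HK _] _].
  assert (IZR K <= Rabs (IZR k)) by (rewrite <- abs_IZR; apply IZR_le; lia).
  assert (d * IZR K <= d * Rabs (IZR k)) by (apply Rmult_le_compat_l; lra).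
  pose proof B_pos as HB.
  assert (B * (d * IZR K) <= B * (Kt u + d * Rabs (IZR k) + d)) by (apply Rmult_le_compat_l; lra).
  pose proof (V_bounds k u ltac:(lra)). pose proof (P_bounds k u ltac:(lra)). fold B in K_large.
  lra.
Qed.

Lemma super_touch_V k u : 1 < u ->
  (forall i, V i u <= B * (Kt u + d * Rabs (IZR i) + d) /\ P i u <= Kt u + d * Rabs (IZR i)) ->
  V k u = B * (Kt u + d * Rabs (IZR k) + d) ->
  0 < B * (rho * (K1 - Kt u)) - V_rhs alpha beta V P k u.
Proof.
  intros Hu Hall HV. unfold V_rhs. destruct (Kt_bounds u ltac:(lra)) as [_ HK'].
  pose proof B_pos as HB. pose proof alpha_B as HaB.
  destruct (Hall k) as [_ HPk]. destruct (Hall (k + 1)%Z) as [_ HPk1].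
  pose proof (Rabs_IZR_neighbour k (k + 1) ltac:(lia)).
  assert (d * Rabs (IZR (k + 1)) <= d * (Rabs (IZR k) + 1)) by (apply Rmult_le_compat_l; lra).
  assert (beta * (P k u + P (k + 1)%Z u) <= beta * (2 * Kt u + 2 * d * Rabs (IZR k) + d))
    by (apply Rmult_le_compat_l; lra).
  assert (B * (rho * (K0 - K1)) <= B * (alpha * d / 2)) by (apply Rmult_le_compat_l; lra).
  assert (B * (- rho * (K0 - K1)) <= B * (rho * (K1 - Kt u))) by (apply Rmult_le_compat_l; lra).
  rewrite HV. nra.
Qed.

Lemma super_touch_P k u : 1 < u ->
  (forall i, V i u <= B * (Kt u + d * Rabs (IZR i) + d) /\ P i u <= Kt u + d * Rabs (IZR i)) ->
  P k u = Kt u + d * Rabs (IZR k) ->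
  0 < rho * (K1 - Kt u) - P_rhs alpha beta f V P k u.
Proof.
  intros Hu Hall HP. unfold P_rhs. destruct (Kt_bounds u ltac:(lra)) as [[HK1 _] HK'].
  pose proof B_pos as HB. pose proof alpha_B as HaB.
  destruct (Hall k) as [HVk _]. destruct (Hall (k - 1)%Z) as [HVk1 _].
  pose proof (Rabs_IZR_neighbour k (k - 1) ltac:(lia)).
  pose proof (Rabs_pos (IZR k)).
  assert (Hf : f (P k u) <= - m).
  { apply f_le. pose proof (P_bounds k u ltac:(lra)). split; nra. }
  assert (alpha * (V k u + V (k - 1)%Z u) <= beta * (2 * Kt u + 2 * d * Rabs (IZR k) + 3 * d)).
  { assert (d * Rabs (IZR (k - 1)) <= d * (Rabs (IZR k) + 1)) by (apply Rmult_le_compat_l; lra).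
    assert (B * (d * Rabs (IZR (k - 1))) <= B * (d * (Rabs (IZR k) + 1)))
      by (apply Rmult_le_compat_l; lra).
    rewrite <- HaB, Rmult_assoc. apply Rmult_le_compat_l; [lra|]. nra. }
  rewrite HP in *. nra.
Qed.

Lemma super_bound k u : 1 <= u ->
  V k u < B * (Kt u + d * Rabs (IZR k) + d) /\ P k u < Kt u + d * Rabs (IZR k).
Proof.
  intros Hu.
  pose proof B_pos as HB.
  assert (Hglobal : forall u, 1 < u ->
    (forall i, (- K <= i <= K)%Z -> 0 <= B * (Kt u + d * Rabs (IZR i) + d) - V i u) ->
    (forall i, (- K <= i <= K)%Z -> 0 <= Kt u + d * Rabs (IZR i) - P i u) ->
    forall i, V i u <= B * (Kt u + d * Rabs (IZR i) + d) /\ P i u <= Kt u + d * Rabs (IZR i)).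
  { intros u' Hu' HV HP i. destruct (Z_le_gt_dec (Z.abs i) K).
    - specialize (HV i ltac:(lia)). specialize (HP i ltac:(lia)). lra.
    - destruct (super_bound_outside i u' ltac:(lra) ltac:(lia)). lra. }
  destruct (Z_le_gt_dec (Z.abs k) K) as [Hk|Hk]; [|apply super_bound_outside; auto; lia].
  destruct (box_positivity (fun k u => B * (Kt u + d * Rabs (IZR k) + d) - V k u)
    (fun k u => Kt u + d * Rabs (IZR k) - P k u)
    (fun k u => B * (rho * (K1 - Kt u)) - V_rhs alpha beta V P k u)
    (fun k u => rho * (K1 - Kt u) - P_rhs alpha beta f V P k u) (- K) K (- K) K 1)
    with u as [HV HP]; [| | | | | |lra|].
  - intros i u' _ Hu'. apply (is_derive_minus _ (V i)); [|apply V_derive; lra].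
    apply is_derive_scal. unfold Kt, relax. auto_derive; [exact I|]. unfold Rminus. ring.
  - intros i u' _ Hu'. apply (is_derive_minus _ (P i)); [|apply P_derive; lra].
    unfold Kt, relax. auto_derive; [exact I|]. unfold Rminus. ring.
  - intros i _. unfold Kt. rewrite relax_start. pose proof (V_bounds i 1 ltac:(lra)).
    pose proof (Rabs_pos (IZR i)).
    assert (B * K0 <= B * (K0 + d * Rabs (IZR i) + d)) by (apply Rmult_le_compat_l; nra).
    fold B in K0_large. lra.
  - intros i _. unfold Kt. rewrite relax_start. pose proof (P_bounds i 1 ltac:(lra)).
    pose proof (Rabs_pos (IZR i)). nra.
  - intros i u' _ Hu' HV HP Hz. apply super_touch_V; [lra|apply Hglobal; auto|lra].
  - intros i u' _ Hu' HV HP Hz. apply super_touch_P; [lra|apply Hglobal; auto|lra].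
  - specialize (HV k ltac:(lia)). specialize (HP k ltac:(lia)). lra.
Qed.

End SuperSolution.

Lemma super_bound_eventually (K1 n x : R) : 1 < K1 -> 0 <= n -> 0 < x ->
  exists T, forall t, T <= t -> forall j, Rabs (IZR j) <= n ->
    V j t < beta / alpha * (K1 + x) /\ P j t < K1 + x.
Proof.
  intros HK1 Hn Hx. set (B := beta / alpha).
  assert (HB : 0 < B) by (apply Rdiv_lt_0_compat; lra).
  assert (HBMB : B * (M / B) = M) by (field; lra).
  assert (HMB : 0 < M / B) by (apply Rdiv_lt_0_compat; lra).
  set (K0 := K1 + M + M / B + 1).
  assert (HK0 : M < K0 /\ M < B * K0) by (unfold K0; rewrite !Rmult_plus_distr_l, HBMB; split; nra).
  destruct (admissible_f_neg_uniform f f_admissible K1 (K1 + M)) as [m [Hm Hfm]]; [lra|lra|].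
  set (d := Rmin (m / (6 * beta)) (x / (2 * (n + 1)))).
  assert (Hd : 0 < d) by (apply Rmin_pos; apply Rdiv_lt_0_compat; lra).
  assert (Hdm : d * (6 * beta) <= m) by (apply Rle_div_r; [lra|apply Rmin_l]).
  assert (Hdx : d * (2 * (n + 1)) <= x) by (apply Rle_div_r; [lra|apply Rmin_r]).
  destruct (archimed ((M + M / B) / d)) as [HK _]. apply Rlt_div_l in HK; [|lra].
  set (rho := Rmin (alpha * d) (m / 2) / (2 * (K0 - K1))).
  assert (HK01 : 0 < K0 - K1) by (unfold K0; lra).
  assert (Hrho : 0 < rho) by (apply Rdiv_lt_0_compat; [apply Rmin_pos|]; nra).
  assert (Hrho1 : rho * (K0 - K1) = Rmin (alpha * d) (m / 2) / 2) by (unfold rho; field; lra).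
  pose proof (Rmin_l (alpha * d) (m / 2)). pose proof (Rmin_r (alpha * d) (m / 2)).
  destruct (relax_eventually_near K0 K1 rho 1 (x / 2) Hrho ltac:(lra)) as [T [HT1 HT]].
  exists T. intros t Ht j Hj.
  specialize (HT t Ht). apply Rabs_le_between in HT.
  assert (Hdj : d * Rabs (IZR j) <= d * n) by (apply Rmult_le_compat_l; lra).
  destruct (super_bound d K0 K1 rho m (up ((M + M / B) / d))) with j t as [HV HP]; fold B; try lra.
  - exact Hfm.
  - split; [lra|]. assert (B * (M / B) < B * (d * IZR (up ((M + M / B) / d))))
      by (apply Rmult_lt_compat_l; lra). lra.
  - assert (B * (relax K0 K1 rho 1 t + d * Rabs (IZR j) + d) <= B * (K1 + x))
      by (apply Rmult_le_compat_l; lra).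
    fold B in HV. split; lra.
Qed.

Lemma eventually_below (N : Z) (eps : R) : 0 < eps ->
  exists T, forall t, T <= t -> forall j, (Z.abs j <= N)%Z ->
    V j t < beta / alpha + eps /\ P j t < 1 + eps.
Proof.
  intros Heps. set (B := beta / alpha).
  assert (HB : 0 < B) by (apply Rdiv_lt_0_compat; lra).
  set (e := eps / (1 + B)).
  assert (He : 0 < e) by (apply Rdiv_lt_0_compat; lra).
  assert (Hee : e + B * e = eps) by (unfold e; field; lra).
  destruct (super_bound_eventually (1 + e / 2) (IZR (Z.max N 0)) (e / 2)) as [T HT];
    [lra|apply IZR_le; lia|lra|].
  exists T. intros t Ht j Hj.
  assert (Hja : Rabs (IZR j) <= IZR (Z.max N 0)) by (rewrite <- abs_IZR; apply IZR_le; lia).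
  destruct (HT t Ht j Hja) as [HV HP]. fold B in HV. split; nra.
Qed.

Hypothesis VP_right_continuous : forall j,
  filterlim (V j) (at_right 0) (locally (V j 0)) /\ filterlim (P j) (at_right 0) (locally (P j 0)).
Hypothesis VP_init_nonneg : forall j, 0 <= V j 0 /\ 0 <= P j 0.

Lemma near_zero_above_box (eta : R) (a b : Z) : 0 < eta ->
  at_right 0 (fun s => forall k, In k (zrange a b) -> - eta < V k s /\ - eta < P k s).
Proof.
  intros Heta. apply filter_forall_In. intros k _.
  destruct (VP_right_continuous k) as [HV HP]. destruct (VP_init_nonneg k).
  apply filter_and; [apply (HV (fun y => - eta < y))|apply (HP (fun y => - eta < y))];
    apply (locally_open _ _ (open_gt (- eta))); auto; lra.
Qed.

Section WeightedLowerBound.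
Variables (L Lam eta : R) (K : Z).
Hypothesis f_ge : forall x, Rabs x <= M -> - L * Rabs x <= f x.
Hypothesis L_pos : 0 < L.
Hypothesis Lam_large : L + 3 * alpha + 3 * beta < Lam.
Hypothesis eta_pos : 0 < eta.
Hypothesis K_large : M < eta * IZR K.

Let w := growth_weight Lam.

Lemma weighted_bound_outside k u : 0 <= u -> (K < Z.abs k)%Z ->
  - eta * w k u < V k u /\ - eta * w k u < P k u.
Proof.
  intros Hu Hk. destruct (growth_weight_ge Lam k u ltac:(lra) Hu) as [Hw _].
  assert (IZR K < Rabs (IZR k)) by (rewrite <- abs_IZR; apply IZR_lt; exact Hk).
  assert (eta * IZR K <= eta * w k u) by (apply Rmult_le_compat_l; unfold w; lra).
  pose proof (V_bounds k u Hu). pose proof (P_bounds k u Hu). lra.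
Qed.

Lemma weighted_touch_V k u : 0 < u ->
  (forall i, - eta * w i u <= V i u /\ - eta * w i u <= P i u) ->
  V k u = - eta * w k u -> 0 < V_rhs alpha beta V P k u + eta * (Lam * w k u).
Proof.
  intros Hu Hall HV. unfold V_rhs.
  destruct (growth_weight_ge Lam k u ltac:(lra) ltac:(lra)) as [_ Hw].
  pose proof (growth_weight_neighbour Lam k (k + 1) u ltac:(lia)) as Hn.
  pose proof (exp_pos (Lam * u)). fold w in Hw, Hn.
  destruct (Hall k) as [_ HPk]. destruct (Hall (k + 1)%Z) as [_ HPk1].
  assert (0 < (Lam - 3 * beta) * (eta * w k u)) by (apply Rmult_lt_0_compat; nra).
  assert (0 <= alpha * (eta * w k u)) by nra.
  assert (eta * w (k + 1)%Z u <= eta * w k u + eta * exp (Lam * u)) by nra.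
  assert (eta * exp (Lam * u) <= eta * w k u) by nra.
  nra.
Qed.

Lemma weighted_touch_P k u : 0 < u ->
  (forall i, - eta * w i u <= V i u /\ - eta * w i u <= P i u) ->
  P k u = - eta * w k u -> 0 < P_rhs alpha beta f V P k u + eta * (Lam * w k u).
Proof.
  intros Hu Hall HP. unfold P_rhs.
  destruct (growth_weight_ge Lam k u ltac:(lra) ltac:(lra)) as [_ Hw].
  pose proof (growth_weight_neighbour Lam k (k - 1) u ltac:(lia)) as Hn.
  pose proof (exp_pos (Lam * u)). fold w in Hw, Hn.
  destruct (Hall k) as [HVk _]. destruct (Hall (k - 1)%Z) as [HVk1 _].
  assert (Hwpos : 0 < eta * w k u) by nra.
  assert (Hf : - L * (eta * w k u) <= f (P k u)).
  { replace (eta * w k u) with (Rabs (P k u)) by (rewrite HP, Rabs_left; lra).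
    apply f_ge, (VP_bounded k u); lra. }
  assert (0 < (Lam - L - 3 * alpha) * (eta * w k u)) by (apply Rmult_lt_0_compat; nra).
  assert (0 <= beta * (eta * w k u)) by nra.
  assert (eta * w (k - 1)%Z u <= eta * w k u + eta * exp (Lam * u)) by nra.
  assert (eta * exp (Lam * u) <= eta * w k u) by nra.
  nra.
Qed.

Lemma weighted_lower_bound j t : 0 < t -> (Z.abs j <= K)%Z ->
  - eta * w j t < V j t /\ - eta * w j t < P j t.
Proof.
  intros Ht Hj.
  destruct (at_right_witness _ t (near_zero_above_box eta (- K) K eta_pos) Ht) as [s [Hs Habove]].
  assert (Hglobal : forall u, 0 < u ->
    (forall i, (- K <= i <= K)%Z -> 0 <= V i u + eta * w i u) ->
    (forall i, (- K <= i <= K)%Z -> 0 <= P i u + eta * w i u) ->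
    forall i, - eta * w i u <= V i u /\ - eta * w i u <= P i u).
  { intros u Hu HV HP i. destruct (Z_le_gt_dec (Z.abs i) K).
    - specialize (HV i ltac:(lia)). specialize (HP i ltac:(lia)). lra.
    - destruct (weighted_bound_outside i u ltac:(lra) ltac:(lia)). lra. }
  destruct (box_positivity (fun k u => V k u + eta * w k u) (fun k u => P k u + eta * w k u)
    (fun k u => V_rhs alpha beta V P k u + eta * (Lam * w k u))
    (fun k u => P_rhs alpha beta f V P k u + eta * (Lam * w k u)) (- K) K (- K) K s)
    with t as [HV HP]; [| | | | | |lra|].
  - intros k u _ Hu. apply (is_derive_plus (V k)), is_derive_scal; [apply V_derive; lra|].
    apply is_derive_growth_weight.
  - intros k u _ Hu. apply (is_derive_plus (P k)), is_derive_scal; [apply P_derive; lra|].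
    apply is_derive_growth_weight.
  - intros k Hk. destruct (Habove k ltac:(apply in_zrange; exact Hk)).
    destruct (growth_weight_ge Lam k s ltac:(lra) ltac:(lra)). pose proof (Rabs_pos (IZR k)).
    assert (eta <= eta * w k s) by (unfold w; nra). lra.
  - intros k Hk. destruct (Habove k ltac:(apply in_zrange; exact Hk)).
    destruct (growth_weight_ge Lam k s ltac:(lra) ltac:(lra)). pose proof (Rabs_pos (IZR k)).
    assert (eta <= eta * w k s) by (unfold w; nra). lra.
  - intros k u _ Hu HV HP Hz. apply weighted_touch_V; [lra|apply Hglobal; auto; lra|lra].
  - intros k u _ Hu HV HP Hz. apply weighted_touch_P; [lra|apply Hglobal; auto; lra|lra].
  - specialize (HV j ltac:(lia)). specialize (HP j ltac:(lia)). lra.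
Qed.

End WeightedLowerBound.

Lemma solution_nonneg j t : 0 < t -> 0 <= V j t /\ 0 <= P j t.
Proof.
  intros Ht.
  destruct (admissible_f_ge_neg_linear f f_admissible M M_pos) as [L [HL Hf]].
  set (Lam := L + 3 * alpha + 3 * beta + 1).
  assert (Hbound : forall eta, 0 < eta ->
    - eta * growth_weight Lam j t < V j t /\ - eta * growth_weight Lam j t < P j t).
  { intros eta Heta.
    set (K := Z.max (Z.abs j) (up (M / eta))).
    apply (weighted_lower_bound L Lam eta K); auto; [unfold Lam; lra| |unfold K; lia].
    destruct (archimed (M / eta)) as [Hup _]. apply Rlt_div_l in Hup; [|lra].
    assert (IZR (up (M / eta)) <= IZR K) by (apply IZR_le; unfold K; lia).
    nra. }
  destruct (growth_weight_ge Lam j t ltac:(unfold Lam; lra) ltac:(lra)) as [Hw _].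
  pose proof (Rabs_pos (IZR j)).
  set (W := growth_weight Lam j t) in *.
  split; apply Rnot_lt_le; intro Hneg.
  - destruct (Hbound (- V j t / (2 * W))) as [H1 _]; [apply Rdiv_lt_0_compat; lra|].
    replace (- (- V j t / (2 * W)) * W) with (V j t / 2) in H1 by (field; lra). lra.
  - destruct (Hbound (- P j t / (2 * W))) as [_ H1]; [apply Rdiv_lt_0_compat; lra|].
    replace (- (- P j t / (2 * W)) * W) with (P j t / 2) in H1 by (field; lra). lra.
Qed.

Lemma P_rhs_lower : exists c, forall j t, 0 < t ->
  - c * P j t + alpha * (V j t + V (j - 1)%Z t) <= P_rhs alpha beta f V P j t.
Proof.
  destruct (admissible_f_ge_neg_linear f f_admissible M M_pos) as [L [HL Hf]].
  exists (L + 2 * beta). intros j t Ht. unfold P_rhs.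
  destruct (solution_nonneg j t Ht) as [_ HP].
  specialize (Hf (P j t) (proj2 (VP_bounded j t ltac:(lra)))).
  rewrite Rabs_pos_eq in Hf by exact HP.
  lra.
Qed.

Lemma V_pos_of_neighbour j a : 0 <= a ->
  (forall t, a < t -> 0 < P j t) \/ (forall t, a < t -> 0 < P (j + 1)%Z t) ->
  forall t, a < t -> 0 < V j t.
Proof.
  intros Ha Hor.
  apply (positive_of_forcing (V j) (V_rhs alpha beta V P j)
           (fun t => beta * (P j t + P (j + 1)%Z t))
           (2 * alpha) a).
  - intros t Ht. apply V_derive. lra.
  - intros t Ht. unfold V_rhs. lra.
  - intros t Ht. apply solution_nonneg. lra.
  - intros t Ht. pose proof (solution_nonneg j t ltac:(lra)).
    pose proof (solution_nonneg (j + 1) t ltac:(lra)).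
    apply Rmult_lt_0_compat; [exact beta_pos|]. destruct Hor as [Hq|Hq]; specialize (Hq t Ht); lra.
Qed.

Lemma P_pos_of_neighbour j a : 0 <= a ->
  (forall t, a < t -> 0 < V j t) \/ (forall t, a < t -> 0 < V (j - 1)%Z t) ->
  forall t, a < t -> 0 < P j t.
Proof.
  intros Ha Hor. destruct P_rhs_lower as [c Hc].
  apply (positive_of_forcing (P j) (P_rhs alpha beta f V P j)
           (fun t => alpha * (V j t + V (j - 1)%Z t)) c a).
  - intros t Ht. apply P_derive. lra.
  - intros t Ht. apply Hc. lra.
  - intros t Ht. apply solution_nonneg. lra.
  - intros t Ht. pose proof (solution_nonneg j t ltac:(lra)).
    pose proof (solution_nonneg (j - 1) t ltac:(lra)).
    apply Rmult_lt_0_compat; [exact alpha_pos|]. destruct Hor as [Hq|Hq]; specialize (Hq t Ht); lra.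
Qed.


Hypothesis VP_init_nonzero : exists j, V j 0 <> 0 \/ P j 0 <> 0.

Lemma positive_somewhere : exists a j0, 0 < a /\
  ((forall t, a < t -> 0 < V j0 t) \/ (forall t, a < t -> 0 < P j0 t)).
Proof.
  destruct VP_init_nonzero as [j0 Hj0]. destruct (VP_init_nonneg j0) as [HV0 HP0].
  destruct (VP_right_continuous j0) as [HV HP].
  destruct Hj0 as [Hj0|Hj0].
  - destruct (at_right_witness (fun s => 0 < V j0 s) 1) as [s [Hs Hpos]];
      [apply (HV (fun y => 0 < y)), (locally_open _ _ (open_gt 0)); auto; lra|lra|].
    exists s, j0. split; [lra|left]. intros t Ht.
    apply (positive_persists (V j0) (V_rhs alpha beta V P j0) (2 * alpha) s); [| |exact Hpos|lra].
    + intros u Hu. apply V_derive. lra.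
    + intros u Hu. unfold V_rhs.
      pose proof (solution_nonneg j0 u ltac:(lra)).
      pose proof (solution_nonneg (j0 + 1) u ltac:(lra)).
      nra.
  - destruct (at_right_witness (fun s => 0 < P j0 s) 1) as [s [Hs Hpos]];
      [apply (HP (fun y => 0 < y)), (locally_open _ _ (open_gt 0)); auto; lra|lra|].
    destruct P_rhs_lower as [c Hc].
    exists s, j0. split; [lra|right]. intros t Ht.
    apply (positive_persists (P j0) (P_rhs alpha beta f V P j0) c s); [| |exact Hpos|lra].
    + intros u Hu. apply P_derive. lra.
    + intros u Hu. specialize (Hc j0 u ltac:(lra)).
      pose proof (solution_nonneg j0 u ltac:(lra)).
      pose proof (solution_nonneg (j0 - 1) u ltac:(lra)).
      nra.
Qed.

Lemma eventually_positive : exists a, 0 < a /\ forall j t, a < t -> 0 < V j t /\ 0 < P j t.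
Proof.
  destruct positive_somewhere as [a [j0 [Ha Hor]]].
  (* positivity travels one site per step: P_j from V_j or V_(j-1), V_j from P_j or P_(j+1) *)
  assert (Hspread : forall n : nat, forall j, (Z.abs (j - j0) <= Z.of_nat n)%Z ->
            (forall t, a < t -> 0 < V j t) /\ (forall t, a < t -> 0 < P j t)).
  { induction n as [|n IH]; intros j Hj.
    - replace j with j0 by lia.
      destruct Hor as [Hh|Hh]; split; auto.
      + apply P_pos_of_neighbour; auto; lra.
      + apply V_pos_of_neighbour; auto; lra.
    - destruct (Z_le_gt_dec (Z.abs (j - j0)) (Z.of_nat n)) as [Hle|Hgt]; [apply IH, Hle|].
      destruct (Z_le_gt_dec j0 j).
      + assert (HP : forall t, a < t -> 0 < P j t)
          by (apply P_pos_of_neighbour; [lra|right; apply IH; lia]).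
        split; [apply V_pos_of_neighbour; auto; lra|exact HP].
      + assert (HV : forall t, a < t -> 0 < V j t)
          by (apply V_pos_of_neighbour; [lra|right; apply IH; lia]).
        split; [exact HV|apply P_pos_of_neighbour; auto; lra]. }
  exists a. split; [exact Ha|]. intros j t Ht.
  destruct (Hspread (Z.to_nat (Z.abs (j - j0))) j ltac:(lia)) as [HV HP]. auto.
Qed.

(* V_j sits at the half-integer site j + 1/2; cos (k j) vanishes at j = +-(L + 1), just outside
   the box, where P >= 0. *)
Section SubSolution.
Variables (c ths k A lam : R) (L : Z).
Hypothesis f_ge : forall p, 0 <= p <= ths -> c * p <= f p.
Hypothesis k_pos : 0 < k.
Hypothesis k_quarter : k * (IZR L + 1) = PI / 2.
Hypothesis A_pos : 0 < A.
Hypothesis sub_V : A * (2 * alpha + lam) < 2 * beta * cos (k / 2).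
Hypothesis sub_P : 2 * beta + lam < c + 2 * alpha * A * cos (k / 2).

Let cV j := cos (k * (IZR j + 1 / 2)).
Let cP j := cos (k * IZR j).

Lemma cV_pos j : (- L - 1 <= j <= L)%Z -> 0 < cV j.
Proof.
  intros Hj. apply cos_gt_0.
  - assert (IZR (- L - 1) <= IZR j) by (apply IZR_le; lia).
    rewrite minus_IZR, opp_IZR in H. nra.
  - assert (IZR j <= IZR L) by (apply IZR_le; lia). nra.
Qed.

Lemma cP_pos j : (- L <= j <= L)%Z -> 0 < cP j.
Proof.
  intros Hj. apply cos_gt_0.
  - assert (IZR (- L) <= IZR j) by (apply IZR_le; lia). rewrite opp_IZR in H. nra.
  - assert (IZR j <= IZR L) by (apply IZR_le; lia). nra.
Qed.

Lemma cP_edges : cP (L + 1) = 0 /\ cP (- L - 1) = 0.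
Proof.
  unfold cP. rewrite plus_IZR, minus_IZR, opp_IZR, k_quarter.
  replace (k * (- IZR L - 1)) with (- (k * (IZR L + 1))) by ring.
  rewrite cos_neg, k_quarter, cos_PI2. split; reflexivity.
Qed.

Section Profile.
Variables (t0 : R) (th dth : R -> R).
Hypothesis t0_pos : 0 < t0.
Hypothesis th_derive : forall u, t0 <= u -> is_derive th u (dth u).
Hypothesis th_bounds : forall u, t0 <= u -> 0 < th u <= ths.
Hypothesis dth_le : forall u, t0 <= u -> dth u <= lam * th u.

Lemma sub_touch_V j u : (- L - 1 <= j <= L)%Z -> t0 < u ->
  (forall i, (- L - 1 <= i <= L + 1)%Z -> th u * cP i <= P i u) ->
  V j u = th u * A * cV j -> 0 < V_rhs alpha beta V P j u - dth u * A * cV j.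
Proof.
  intros Hj Hu HP HV. unfold V_rhs.
  pose proof (cV_pos j Hj). destruct (th_bounds u ltac:(lra)). pose proof (dth_le u ltac:(lra)).
  assert (Hsum : cP j + cP (j + 1)%Z = 2 * cos (k / 2) * cV j).
  { unfold cP, cV. rewrite plus_IZR, <- cos_add_sub. f_equal; f_equal; field. }
  specialize (HP j ltac:(lia)) as HPj. specialize (HP (j + 1)%Z ltac:(lia)) as HPj1.
  assert (beta * (th u * (2 * cos (k / 2) * cV j)) <= beta * (P j u + P (j + 1)%Z u))
    by (rewrite <- Hsum; apply Rmult_le_compat_l; lra).
  assert (dth u * A * cV j <= lam * th u * A * cV j) by (apply Rmult_le_compat_r; nra).
  assert (0 < th u * cV j * (2 * beta * cos (k / 2) - A * (2 * alpha + lam)))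
    by (repeat apply Rmult_lt_0_compat; lra).
  rewrite HV. nra.
Qed.

Lemma sub_touch_P j u : (- L <= j <= L)%Z -> t0 < u ->
  (forall i, (- L - 1 <= i <= L)%Z -> th u * A * cV i <= V i u) ->
  P j u = th u * cP j -> 0 < P_rhs alpha beta f V P j u - dth u * cP j.
Proof.
  intros Hj Hu HV HP. unfold P_rhs.
  pose proof (cP_pos j Hj). destruct (th_bounds u ltac:(lra)). pose proof (dth_le u ltac:(lra)).
  assert (cP j <= 1) by apply COS_bound.
  assert (Hsum : cV j + cV (j - 1)%Z = 2 * cos (k / 2) * cP j).
  { unfold cP, cV. rewrite minus_IZR, Rplus_comm, <- cos_add_sub. f_equal; f_equal; field. }
  specialize (HV j ltac:(lia)) as HVj. specialize (HV (j - 1)%Z ltac:(lia)) as HVj1.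
  assert (Hf : c * (th u * cP j) <= f (P j u)) by (rewrite HP; apply f_ge; split; nra).
  assert (alpha * (th u * A * (2 * cos (k / 2) * cP j)) <= alpha * (V j u + V (j - 1)%Z u))
    by (rewrite <- Hsum; apply Rmult_le_compat_l; lra).
  assert (dth u * cP j <= lam * th u * cP j) by (apply Rmult_le_compat_r; nra).
  assert (0 < th u * cP j * (c + 2 * alpha * A * cos (k / 2) - 2 * beta - lam))
    by (repeat apply Rmult_lt_0_compat; lra).
  rewrite HP in *. nra.
Qed.

Hypothesis sub_init : forall j, (- L - 1 <= j <= L)%Z ->
  th t0 * (A + 1) < V j t0 /\ th t0 * (A + 1) < P j t0.

Lemma sub_bound j u : t0 <= u -> (- L <= j <= L)%Z ->
  th u * A * cV j < V j u /\ th u * cP j < P j u.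
Proof.
  intros Hu Hj.
  destruct (box_positivity (fun i u => V i u - th u * A * cV i) (fun i u => P i u - th u * cP i)
    (fun i u => V_rhs alpha beta V P i u - dth u * A * cV i)
    (fun i u => P_rhs alpha beta f V P i u - dth u * cP i) (- L - 1) L (- L) L t0)
    with u as [HV HP]; [| | | | | |exact Hu|].
  - intros i u' _ Hu'. apply (is_derive_minus (V i)); [apply V_derive; lra|].
    apply is_derive_mult_const_r, is_derive_mult_const_r, th_derive, Hu'.
  - intros i u' _ Hu'. apply (is_derive_minus (P i)); [apply P_derive; lra|].
    apply is_derive_mult_const_r, th_derive, Hu'.
  - intros i Hi. destruct (sub_init i Hi). destruct (th_bounds t0 (Rle_refl _)).
    assert (cV i <= 1) by apply COS_bound.
    assert (th t0 * A * cV i <= th t0 * A)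
      by (rewrite <- (Rmult_1_r (th t0 * A)) at 2; apply Rmult_le_compat_l; nra).
    nra.
  - intros i Hi. destruct (sub_init i ltac:(lia)). destruct (th_bounds t0 (Rle_refl _)).
    assert (cP i <= 1) by apply COS_bound.
    assert (th t0 * cP i <= th t0)
      by (rewrite <- (Rmult_1_r (th t0)) at 2; apply Rmult_le_compat_l; lra).
    nra.
  - intros i u' Hi Hu' HVnn HPnn Hz. apply sub_touch_V; [exact Hi|exact Hu'| |lra].
    intros i' Hi'. destruct cP_edges as [Hr Hl].
    destruct (Z.eq_dec i' (L + 1)) as [->|].
    { rewrite Hr. pose proof (solution_nonneg (L + 1) u' ltac:(lra)). lra. }
    destruct (Z.eq_dec i' (- L - 1)) as [->|].
    { rewrite Hl. pose proof (solution_nonneg (- L - 1) u' ltac:(lra)). lra. }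
    specialize (HPnn i' ltac:(lia)). lra.
  - intros i u' Hi Hu' HVnn HPnn Hz. apply sub_touch_P; [exact Hi|exact Hu'| |lra].
    intros i' Hi'. specialize (HVnn i' Hi'). lra.
  - specialize (HV j ltac:(lia)). specialize (HP j Hj). lra.
Qed.

End Profile.

Hypothesis lam_pos : 0 < lam.
Hypothesis ths_pos : 0 < ths.

Lemma sub_bound_eventually x : 0 < x -> exists T, forall t, T <= t -> forall j, (- L <= j <= L)%Z ->
  (ths - x) * A * cV j < V j t /\ (ths - x) * cP j < P j t.
Proof.
  intros Hx. destruct eventually_positive as [a [Ha Hpos]].
  set (t0 := a + 1).
  destruct (list_min_pos (fun j => Rmin (V j t0) (P j t0)) (zrange (- L - 1) L)) as [m0 [Hm0 Hmin]].
  { intros j _. destruct (Hpos j t0 ltac:(unfold t0; lra)). apply Rmin_pos; assumption. }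
  set (del := Rmin (ths / 2) (m0 / (A + 2))).
  assert (Hdel : 0 < del) by (apply Rmin_pos; apply Rdiv_lt_0_compat; lra).
  assert (Hdel1 : del <= ths / 2) by apply Rmin_l.
  assert (Hdel2 : del * (A + 2) <= m0) by (apply Rle_div_r; [lra|apply Rmin_r]).
  set (mu := lam * del / ths).
  assert (Hmu : 0 < mu) by (apply Rdiv_lt_0_compat; nra).
  assert (Hmu1 : mu * ths <= lam * del) by (right; unfold mu; field; lra).
  pose proof (fun u => relax_profile del ths mu lam t0 u ltac:(lra) ltac:(lra) Hmu1) as Hth.
  destruct (relax_eventually_near del ths mu t0 x Hmu Hx) as [T [HT0 HT]].
  set (th := relax del ths mu t0) in *.
  exists T. intros t Ht j Hj.
  specialize (HT t Ht). apply Rabs_le_between in HT.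
  destruct (sub_bound t0 th (fun u => mu * (ths - th u))) with j t as [HV HP]; try lra.
  - unfold t0. lra.
  - intros u Hu. apply is_derive_relax.
  - intros u Hu. specialize (Hth u Hu). lra.
  - intros u Hu. apply Hth, Hu.
  - intros i Hi. unfold th. rewrite relax_start.
    specialize (Hmin i ltac:(apply in_zrange; exact Hi)).
    pose proof (Rmin_l (V i t0) (P i t0)). pose proof (Rmin_r (V i t0) (P i t0)). lra.
  - exact Hj.
  - pose proof (cV_pos j ltac:(lia)). pose proof (cP_pos j Hj). split.
    + apply Rle_lt_trans with (th t * A * cV j); [|exact HV].
      apply Rmult_le_compat_r; [lra|]. apply Rmult_le_compat_r; lra.
    + apply Rle_lt_trans with (th t * cP j); [|exact HP]. apply Rmult_le_compat_r; lra.
Qed.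

End SubSolution.

Lemma sub_bound_near_one (N : Z) (eta : R) : 0 < eta <= 1 / 2 ->
  exists T, forall t, T <= t -> forall j, (Z.abs j <= N)%Z ->
    beta / alpha * (1 - eta) ^ 4 < V j t /\ (1 - eta) ^ 2 < P j t.
Proof.
  intros Heta. set (B := beta / alpha).
  assert (HB : 0 < B) by (apply Rdiv_lt_0_compat; lra).
  set (ths := 1 - eta / 2).
  destruct (admissible_f_ge_linear f f_admissible ths) as [c [Hc Hfc]]; [unfold ths; lra|].
  set (delta := Rmin eta (c / (8 * beta))).
  assert (Hdelta : 0 < delta) by (apply Rmin_pos; [lra|apply Rdiv_lt_0_compat; lra]).
  assert (Hdelta1 : delta <= eta) by apply Rmin_l.
  assert (Hdelta2 : delta * (8 * beta) <= c) by (apply Rle_div_r; [lra|apply Rmin_r]).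
  set (n := IZR (Z.max N 0)). assert (Hn : 0 <= n) by (apply IZR_le; lia).
  destruct (cos_parameters n delta N Hn ltac:(lra)) as [L [k [HNL [Hk [Hkq Hcos]]]]].
  assert (Hgam : 1 - delta <= cos (k / 2) <= 1).
  { split; [|apply COS_bound]. replace (k / 2) with (k * (1 / 2)) by field.
    apply Hcos. rewrite Rabs_pos_eq; lra. }
  destruct (sub_coefficients alpha beta c (cos (k / 2)) delta)
    as [A [lam [HA [Hlam [HsV [HsP HAB]]]]]]; try lra.
  assert (Hths : 0 < ths) by (unfold ths; lra).
  assert (Heta' : 0 < eta / 2) by lra.
  destruct (sub_bound_eventually c ths k A lam L Hfc Hk Hkq HA HsV HsP Hlam Hths (eta / 2) Heta')
    as [T HT].
  exists T. intros t Ht j Hj.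
  assert (Hja : Rabs (IZR j) <= n) by (rewrite <- abs_IZR; apply IZR_le; lia).
  destruct (HT t Ht j ltac:(lia)) as [HV HP].
  replace (ths - eta / 2) with (1 - eta) in HV, HP by (unfold ths; field).
  assert (HcP : 1 - eta <= cos (k * IZR j)) by (specialize (Hcos (IZR j)); lra).
  assert (HcV : 1 - eta <= cos (k * (IZR j + 1 / 2))).
  { enough (1 - delta <= cos (k * (IZR j + 1 / 2))) by lra. apply Hcos.
    pose proof (Rabs_triang (IZR j) (1 / 2)). rewrite (Rabs_pos_eq (1 / 2)) in H by lra. lra. }
  assert (HAeta : B * ((1 - eta) * (1 - eta)) <= A).
  { fold B in HAB. eapply Rle_trans; [|exact HAB].
    apply Rmult_le_compat_l; [lra|]. apply Rmult_le_compat; lra. }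
  split.
  - apply Rle_lt_trans with ((1 - eta) * A * cos (k * (IZR j + 1 / 2))); [|exact HV].
    replace (B * (1 - eta) ^ 4) with ((1 - eta) * (B * ((1 - eta) * (1 - eta))) * (1 - eta))
      by ring.
    apply Rmult_le_compat; [apply Rmult_le_pos; [lra|apply Rmult_le_pos; nra]
                           |lra|apply Rmult_le_compat_l; lra|lra].
  - apply Rle_lt_trans with ((1 - eta) * cos (k * IZR j)); [|exact HP].
    replace ((1 - eta) ^ 2) with ((1 - eta) * (1 - eta)) by ring. apply Rmult_le_compat_l; lra.
Qed.

Lemma eventually_above (N : Z) (eps : R) : 0 < eps ->
  exists T, forall t, T <= t -> forall j, (Z.abs j <= N)%Z ->
    beta / alpha - eps < V j t /\ 1 - eps < P j t.
Proof.
  intros Heps. set (B := beta / alpha).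
  assert (HB : 0 < B) by (apply Rdiv_lt_0_compat; lra).
  set (eta := Rmin (1 / 2) (eps / (4 * (1 + B)))).
  assert (Heta : 0 < eta) by (apply Rmin_pos; [lra|apply Rdiv_lt_0_compat; lra]).
  assert (Heta1 : eta <= 1 / 2) by apply Rmin_l.
  assert (Heta2 : eta * (4 * (1 + B)) <= eps) by (apply Rle_div_r; [lra|apply Rmin_r]).
  destruct (sub_bound_near_one N eta ltac:(lra)) as [T HT].
  exists T. intros t Ht j Hj. destruct (HT t Ht j Hj) as [HV HP]. fold B in HV.
  assert (B * (1 - 4 * eta) <= B * (1 - eta) ^ 4) by (apply Rmult_le_compat_l; [lra|nra]).
  split; nra.
Qed.

End Solution.

Theorem proposition6p3
  (alpha beta : R) (f : R -> R) (V0 P0 : Z -> R) (V P : Z -> R -> R) :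
  0 < alpha -> 0 < beta ->
  admissible_f f ->
  bounded_seq V0 -> bounded_seq P0 ->
  (forall j, 0 <= V0 j /\ 0 <= P0 j) ->
  (exists j, V0 j <> 0 \/ P0 j <> 0) ->
  (* (V,P) is a bounded global classical solution *)
  (forall j, exists dV dP, C1_on_with (V j) nonneg_half_line dV
                         /\ C1_on_with (P j) nonneg_half_line dP) ->
  (exists M, forall j t, 0 <= t -> Rabs (V j t) <= M /\ Rabs (P j t) <= M) ->
  (forall j t, 0 < t ->
     is_derive (V j) t (- 2 * alpha * V j t + beta * (P j t + P (j + 1)%Z t))) ->
  (forall j t, 0 < t ->
     is_derive (P j) t (f (P j t) + alpha * (V j t + V (j - 1)%Z t) - 2 * beta * P j t)) ->
  (forall j, V j 0 = V0 j /\ P j 0 = P0 j) ->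
  (* locally uniform convergence in j to (beta/alpha, 1) *)
  forall (N : Z) (eps : R), 0 < eps ->
    exists T, forall t, T <= t -> forall j, (Z.abs j <= N)%Z ->
      Rabs (V j t - beta / alpha) < eps /\ Rabs (P j t - 1) < eps.
Proof.
  intros Ha Hb Hf _ _ Hnn Hnz HC [Mb HMb] HVd HPd Hinit N eps Heps.
  pose proof (Rmax_l Mb 1). pose proof (Rmax_r Mb 1).
  set (M := Rmax Mb 1) in *.
  assert (HM : 0 < M) by lra.
  assert (Hbd : forall j t, 0 <= t -> Rabs (V j t) <= M /\ Rabs (P j t) <= M).
  { intros j t Ht. destruct (HMb j t Ht). split; lra. }
  assert (Hrc : forall j, filterlim (V j) (at_right 0) (locally (V j 0)) /\
                          filterlim (P j) (at_right 0) (locally (P j 0))).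
  { intros j. destruct (HC j) as [dV [dP [[HdV _] [HdP _]]]].
    assert (Hzero : nonneg_half_line 0) by (unfold nonneg_half_line; lra).
    split; eapply has_deriv_within_right_continuous; [apply HdV, Hzero|apply HdP, Hzero]. }
  assert (Hnn0 : forall j, 0 <= V j 0 /\ 0 <= P j 0)
    by (intros j; rewrite (proj1 (Hinit j)), (proj2 (Hinit j)); apply Hnn).
  assert (Hnz0 : exists j, V j 0 <> 0 \/ P j 0 <> 0)
    by (destruct Hnz as [j Hj]; exists j; rewrite (proj1 (Hinit j)), (proj2 (Hinit j)); exact Hj).
  destruct (eventually_below alpha beta M f V P Ha Hb Hf HM Hbd HVd HPd N eps Heps) as [T1 HT1].
  destruct (eventually_above alpha beta M f V P Ha Hb Hf HM Hbd HVd HPd Hrc Hnn0 Hnz0 N eps Heps)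
    as [T2 HT2].
  exists (Rmax T1 T2). intros t Ht j Hj.
  pose proof (Rmax_l T1 T2). pose proof (Rmax_r T1 T2).
  destruct (HT1 t ltac:(lra) j Hj). destruct (HT2 t ltac:(lra) j Hj).
  split; apply Rabs_def1; lra.
Qed.
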